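(* Let $\ket{GHZ_3}=\frac{1}{\sqrt{3}}(\ket{000}+\ket{111}+\ket{222})\in\mathbb{C}^3\otimes\mathbb{C}^3\otimes\mathbb{C}^3$, shared among three parties $A,B,C$. Then for every normalized three-qubit pure state $\ket{\phi}\in\mathbb{C}^2\otimes\mathbb{C}^2\otimes\mathbb{C}^2$ (with the $i$-th qubit held by the $i$-th party), $\ket{GHZ_3}$ can be transformed into $\ket{\phi}$ by LOCC; i.e., $\ket{GHZ_3}$ is a common resource for the set of all three-qubit pure states.
   Context: An LOCC transformation is one implementable by local quantum operations of the three parties together with classical communication among them; ''$\ket{\psi}$ can be transformed into $\ket{\phi}$ by LOCC'' means there is such a protocol producing $\ket{\phi}$ from $\ket{\psi}$ with probability one (local embeddings of $\mathbb{C}^2$ into $\mathbb{C}^3$ are allowed, i.e. the output qubits are regarded as two-dimensional subspaces of the local spaces). A common resource for a set $S$ of states is a state that can be transformed by LOCC into every state of $S$. *)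

From mathcomp Require Import all_boot all_algebra.
From mathcomp Require Import reals complex.
Set Implicit Arguments. Unset Strict Implicit. Unset Printing Implicit Defensive.
Import GRing.Theory Num.Theory.
Local Open Scope ring_scope.
Local Open Scope complex_scope.

Section LOCC.
Variable R : realType.
Local Notation C := R[i].

(* Unnormalized vector of C^d ⊗ C^d ⊗ C^d, as coefficients in the product basis |a b c>. *)
Definition tri (d : nat) := 'I_d -> 'I_d -> 'I_d -> C.

Definition adj (m n : nat) (M : 'M[C]_(m, n)) : 'M[C]_(n, m) := (map_mx Num.conj M)^T.

Definition sqnorm d (psi : tri d) : C :=
  \sum_(a < d) \sum_(b < d) \sum_(c < d) psi a b c * (psi a b c)^*.

(* Operator M applied locally by party k (0 = A, 1 = B, 2 = C). *)
Definition apply_local d (k : 'I_3) (M : 'M[C]_d) (psi : tri d) : tri d :=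
  fun a b c =>
    if k == 0 then \sum_(l < d) M a l * psi l b c
    else if k == 1 then \sum_(l < d) M b l * psi a l c
    else \sum_(l < d) M c l * psi a b l.

Definition embed (VA VB VC : 'M[C]_(3, 2)) (phi : tri 2) : tri 3 :=
  fun i j k => \sum_(a < 2) \sum_(b < 2) \sum_(c < 2)
                 VA i a * VB j b * VC k c * phi a b c.

Definition isometry32 (V : 'M[C]_(3, 2)) : Prop := adj V *m V = 1%:M.

(* Complete set of Kraus operators of a local instrument on C^3 (one operator per
   outcome; arbitrary finite number of outcomes). *)
Definition kraus_complete (Ms : seq 'M[C]_3) : Prop :=
  \sum_(M <- Ms) adj M *m M = 1%:M.

(* locc_reach phi psi : starting from the (unnormalized, nonzero) tripartite state psi,
   some finite-round LOCC protocol yields, with probability one, the three-qubit state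
   phi (up to a global phase / the normalization of the branch and local embeddings
   C^2 -> C^3).  In each round one party performs a local measurement with Kraus
   operators Ms and announces the outcome; every outcome of nonzero probability must be
   continued by a protocol (which may depend on all previous outcomes). *)
Inductive locc_reach (phi : tri 2) : tri 3 -> Prop :=
| locc_done (psi : tri 3) (VA VB VC : 'M[C]_(3, 2)) (z : C) :
    isometry32 VA -> isometry32 VB -> isometry32 VC -> z != 0 ->
    psi = (fun i j k => z * embed VA VB VC phi i j k) ->
    locc_reach phi psi
| locc_step (psi : tri 3) (k : 'I_3) (Ms : seq 'M[C]_3) :
    kraus_complete Ms ->
    (forall M, M \in Ms -> sqnorm (apply_local k M psi) != 0 ->
                 locc_reach phi (apply_local k M psi)) ->
    locc_reach phi psi.

Definition GHZ3 : tri 3 :=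
  fun a b c => if (a == b) && (b == c) then ((Num.sqrt (3 : R))^-1)%:C else 0.

End LOCC.

(* After local unitaries on A and B the [|11>_AB] component of [phi] vanishes, so
   [phi = sum_r n_r |a_r b_r> (x) w_r] over three branches [(a_r, b_r) = 00, 01, 10],
   with weights [n_r >= 0] and unit vectors [w_r].  From GHZ_3, Alice measures with
   Kraus operators [|i> -> n_(i+m) / |n| |i+m>] ([m] mod 3) and Bob and Charlie undo
   the cyclic shift [m], leaving [sum_r n_r |rrr>].  The maps [|r> -> |a_r>],
   [|r> -> |b_r>] and [|r> -> w_r] have unit columns but are not isometries; each is
   measured twisted by the four diagonal sign matrices, and the sign flip left by an
   outcome can be moved to, and undone by, the other two parties, because on these
   states a diagonal sign at one party equals a product of diagonal signs at the
   others. *)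

From mathcomp Require Import all_boot all_algebra.
From mathcomp Require Import reals complex.
From mathcomp Require Import ring.
Set Implicit Arguments. Unset Strict Implicit. Unset Printing Implicit Defensive.
Import GRing.Theory Num.Theory.
Local Open Scope ring_scope.

Ltac case_ord x := let H := fresh "H" in case: x => [[|[|[|?]]] H] //.

Section LocalOperators.
Context {R : realType}.
Local Notation C := R[i].

Lemma adjE m n (M : 'M[C]_(m, n)) i j : adj M i j = (M j i)^*.
Proof. by rewrite !mxE. Qed.

Lemma tri_ext d (f g : tri R d) : (forall a b c, f a b c = g a b c) -> f = g.
Proof. by move=> fg; do 3 (apply: boolp.funext => ?). Qed.

Definition tri_scale d (z : C) (psi : tri R d) : tri R d := fun a b c => z * psi a b c.

Lemma apply_localM d k (A B : 'M[C]_d) (psi : tri R d) :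
  apply_local k A (apply_local k B psi) = apply_local k (A *m B) psi.
Proof.
apply: tri_ext => a b c; rewrite /apply_local.
by case: (k == 0); [|case: (k == 1)];
  under eq_bigr do rewrite mulr_sumr; rewrite exchange_big; apply: eq_bigr => l _;
  rewrite mxE mulr_suml; apply: eq_bigr => l' _; rewrite mulrA.
Qed.

Lemma apply_local1 d k (psi : tri R d) : apply_local k 1%:M psi = psi.
Proof.
have delta (a : 'I_d) (f : 'I_d -> C) : \sum_(l < d) (1%:M : 'M[C]_d) a l * f l = f a.
  rewrite (bigD1 a) //= big1 ?addr0 => [|l /negbTE nla]; first by rewrite mxE eqxx mul1r.
  by rewrite mxE eq_sym nla mul0r.
by apply: tri_ext => a b c; rewrite /apply_local;
  case: (k == 0); [|case: (k == 1)]; rewrite delta.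
Qed.

Lemma apply_local0 d k (M : 'M[C]_d) :
  apply_local k M (fun _ _ _ => 0) = (fun _ _ _ => 0).
Proof.
apply: tri_ext => a b c; rewrite /apply_local.
by case: (k == 0); [|case: (k == 1)]; rewrite big1 // => *; rewrite mulr0.
Qed.

Lemma apply_local_scale d k (M : 'M[C]_d) (z : C) (psi : tri R d) :
  apply_local k M (tri_scale z psi) = tri_scale z (apply_local k M psi).
Proof.
apply: tri_ext => a b c; rewrite /apply_local /tri_scale.
by case: (k == 0); [|case: (k == 1)]; rewrite mulr_sumr; apply: eq_bigr => l _;
  rewrite mulrCA.
Qed.

Lemma apply_localZ d k (z : C) (M : 'M[C]_d) (psi : tri R d) :
  apply_local k (z *: M) psi = tri_scale z (apply_local k M psi).
Proof.
apply: tri_ext => a b c; rewrite /apply_local /tri_scale.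
by case: (k == 0); [|case: (k == 1)]; rewrite mulr_sumr; apply: eq_bigr => l _;
  rewrite mxE mulrA.
Qed.

Lemma apply_localC (j k : 'I_3) (A B : 'M[C]_3) (psi : tri R 3) : j != k ->
  apply_local j A (apply_local k B psi) = apply_local k B (apply_local j A psi).
Proof.
move=> neq_jk; apply: tri_ext => a b c; rewrite /apply_local.
by move: neq_jk; case_ord j; case_ord k; rewrite /= => _;
  under eq_bigr do rewrite mulr_sumr; rewrite exchange_big /=; apply: eq_bigr => l _;
  rewrite mulr_sumr; apply: eq_bigr => l' _; ring.
Qed.

Lemma sqnorm_scale d (z : C) (psi : tri R d) :
  sqnorm (tri_scale z psi) = z * z^* * sqnorm psi.
Proof.
rewrite /sqnorm /tri_scale !mulr_sumr; apply: eq_bigr => a _; rewrite mulr_sumr.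
apply: eq_bigr => b _; rewrite mulr_sumr; apply: eq_bigr => c _.
by rewrite rmorphM /=; ring.
Qed.

End LocalOperators.

Section Reachability.
Context {R : realType}.
Local Notation C := R[i].
Variable phi : tri R 2.

Lemma locc_reach_scale (psi : tri R 3) (z : C) : z != 0 ->
  locc_reach phi psi -> locc_reach phi (tri_scale z psi).
Proof.
move=> z0; elim=> {psi} [psi VA VB VC w isoA isoB isoC w0 ->|psi k Ms HMs _ IH].
  apply: (@locc_done _ _ _ VA VB VC (z * w)); rewrite ?mulf_neq0 //.
  by apply: tri_ext => a b c; rewrite /tri_scale mulrA.
apply: (locc_step (k := k) HMs) => M HM.
rewrite apply_local_scale sqnorm_scale => nz; apply: IH => //.
by apply: contraNneq nz => ->; rewrite mulr0.
Qed.

Lemma locc_reach_undo (psi : tri R 3) k (U Q : 'M[C]_3) :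
  adj U *m U = 1%:M -> U *m Q = 1%:M ->
  locc_reach phi psi -> locc_reach phi (apply_local k Q psi).
Proof.
move=> unitU UQ reach_psi; apply: (locc_step (k := k) (Ms := [:: U])).
  by rewrite /kraus_complete big_seq1.
by move=> M; rewrite inE => /eqP -> _; rewrite apply_localM UQ apply_local1.
Qed.

End Reachability.

Section SignTwirl.
Context {R : realType}.
Local Notation C := R[i].

Definition unit_columns n (M : 'M[C]_n) := forall l, \sum_(c < n) (M c l)^* * M c l = 1.

Definition sign (b : bool) : C := if b then -1 else 1.

Definition sign_entry (e1 e2 : bool) (i : nat) : C :=
  match i with 1 => sign e1 | 2 => sign e2 | _ => 1 end.

Definition sign_mx (e1 e2 : bool) : 'M[C]_3 :=
  \matrix_(i, j) if i == j then sign_entry e1 e2 i else 0.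

Lemma sign_entry_conj e1 e2 i : (sign_entry e1 e2 i)^* = sign_entry e1 e2 i.
Proof.
by case: i => [|[|[|i]]]; rewrite /= ?rmorph1 //; case: e1; case: e2;
  rewrite /sign ?rmorphN rmorph1.
Qed.

Lemma sign_entry_sq e1 e2 i : sign_entry e1 e2 i * sign_entry e1 e2 i = 1.
Proof.
by case: i => [|[|[|i]]]; rewrite /= ?mulr1 //; case: e1; case: e2;
  rewrite /sign ?mulrNN mulr1.
Qed.

Lemma mul_sign_mx (M : 'M[C]_3) e1 e2 i j :
  (M *m sign_mx e1 e2) i j = M i j * sign_entry e1 e2 j.
Proof.
rewrite mxE (bigD1 j) //= big1 ?addr0 => [|l /negbTE nlj]; first by rewrite mxE eqxx.
by rewrite mxE nlj mulr0.
Qed.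

Lemma sign_mxK e1 e2 : sign_mx e1 e2 *m sign_mx e1 e2 = 1%:M.
Proof.
apply/matrixP => i j; rewrite mul_sign_mx !mxE.
by case: eqVneq => [->|_]; rewrite ?sign_entry_sq ?mul0r.
Qed.

Lemma adj_sign_mx e1 e2 : adj (sign_mx e1 e2) = sign_mx e1 e2.
Proof.
apply/matrixP => i j; rewrite adjE !mxE eq_sym.
by case: eqP => [->|_]; rewrite ?sign_entry_conj ?rmorph0.
Qed.

Lemma sign_mx_unitary e1 e2 : adj (sign_mx e1 e2) *m sign_mx e1 e2 = 1%:M.
Proof. by rewrite adj_sign_mx sign_mxK. Qed.

Lemma sign_mx_ff : sign_mx false false = 1%:M.
Proof. by apply/matrixP => i j; rewrite !mxE; case_ord i; case_ord j. Qed.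

Definition sign_twirl (M : 'M[C]_3) : seq 'M[C]_3 :=
  [seq 2^-1 *: (M *m sign_mx e.1 e.2) |
     e <- [:: (false, false); (false, true); (true, false); (true, true)]].

Lemma sign_twirl_entry (M : 'M[C]_3) (z : C) e1 e2 i j :
  (adj (z *: (M *m sign_mx e1 e2)) *m (z *: (M *m sign_mx e1 e2))) i j =
  z^* * z * (sign_entry e1 e2 i * sign_entry e1 e2 j) * (adj M *m M) i j.
Proof.
rewrite !mxE mulr_sumr; apply: eq_bigr => c _.
rewrite !adjE !scalemxAl !mul_sign_mx !mxE !rmorphM /= sign_entry_conj; ring.
Qed.

(* The four sign patterns are the characters of Z/2 x Z/2: summing over them kills
   every off-diagonal entry of [adj M *m M]. *)
Lemma sign_entry_orthogonal (i j : nat) : (i < 3)%N -> (j < 3)%N -> i != j ->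
  \sum_(e <- [:: (false, false); (false, true); (true, false); (true, true)])
     sign_entry e.1 e.2 i * sign_entry e.1 e.2 j = 0.
Proof.
rewrite !big_cons big_nil addr0 /=.
by case: i => [|[|[|i]]] //; case: j => [|[|[|j]]] //= _ _ _; rewrite /sign; ring.
Qed.

Lemma sign_twirl_complete (M : 'M[C]_3) : unit_columns M -> kraus_complete (sign_twirl M).
Proof.
move=> unitM; rewrite /kraus_complete big_map; apply/matrixP => i j.
rewrite summxE; under eq_bigr do rewrite sign_twirl_entry.
have half_real : (2^-1 : C)^* = 2^-1 by rewrite rmorphV ?unitfE ?pnatr_eq0 // rmorph_nat.
rewrite half_real -big_distrl -big_distrr /= [RHS]mxE.
have [<-|nij] := eqVneq i j.
  have diagM : (adj M *m M) i i = 1.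
    by rewrite mxE -(unitM i); apply: eq_bigr => c _; rewrite adjE.
  rewrite diagM !big_cons big_nil !sign_entry_sq /=.
  have two_neq0 : (2 : C) != 0 by rewrite pnatr_eq0.
  by field.
by rewrite (sign_entry_orthogonal (ltn_ord i) (ltn_ord j) nij) mulr0 mul0r.
Qed.

Definition sign_movable (k : 'I_3) (psi : tri R 3) :=
  forall e1 e2, exists j1 j2 f1 f2 g1 g2, [/\ j1 != k, j2 != k &
    apply_local k (sign_mx e1 e2) psi =
    apply_local j1 (sign_mx f1 f2) (apply_local j2 (sign_mx g1 g2) psi)].

Lemma locc_reach_sign_twirl phi k (M : 'M[C]_3) psi :
  unit_columns M -> sign_movable k psi ->
  locc_reach phi (apply_local k M psi) -> locc_reach phi psi.
Proof.
move=> unitM movable reach_M.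
apply: (locc_step (k := k) (sign_twirl_complete unitM)) => _ /mapP[[e1 e2] _ ->] _.
have [j1 [j2 [f1 [f2 [g1 [g2 [nj1 nj2 moved]]]]]]] := movable e1 e2.
rewrite apply_localZ -apply_localM moved.
rewrite -(apply_localC _ _ _ nj1) -(apply_localC _ _ _ nj2) -2!apply_local_scale.
do 2 apply: (locc_reach_undo _ (sign_mx_unitary _ _) (sign_mxK _ _)).
by apply: locc_reach_scale; rewrite // invr_eq0 pnatr_eq0.
Qed.

End SignTwirl.

Section Spreading.
Context {R : realType}.
Local Notation C := R[i].

Definition diag_state (n : nat -> C) : tri R 3 :=
  fun a b c => if (a == b) && (b == c) then n a else 0.

Definition weight_norm (n : nat -> C) : C := sqrtC (n 0 * n 0 + n 1 * n 1 + n 2 * n 2).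

Definition cyclic_shift (m : nat) : 'M[C]_3 :=
  \matrix_(i < 3, l < 3) if i == ((l + m) %% 3)%N :> nat then 1 else 0.

Definition spread_kraus (n : nat -> C) (m : nat) : 'M[C]_3 :=
  \matrix_(i < 3, l < 3)
    if i == ((l + m) %% 3)%N :> nat then (weight_norm n)^-1 * n i else 0.

Lemma cyclic_shift_unitary m : (m < 3)%N ->
  adj (cyclic_shift m) *m cyclic_shift m = 1%:M /\
  cyclic_shift m *m (cyclic_shift m)^T = 1%:M.
Proof.
move=> lt_m3; split; apply/matrixP => i j;
  rewrite !mxE !big_ord_recl !big_ord0 ?adjE !mxE;
  by case: m lt_m3 => [|[|[|m]]] // _; case_ord i; case_ord j;
    rewrite /= ?rmorph0 ?rmorph1; ring.
Qed.

Lemma spread_kraus_complete (n : nat -> C) :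
  (forall i, 0 <= n i) -> weight_norm n != 0 ->
  kraus_complete [:: spread_kraus n 0; spread_kraus n 1; spread_kraus n 2].
Proof.
move=> n_ge0 s_neq0; set s := weight_norm n in s_neq0 *.
have n_real i : (n i)^* = n i by exact: geC0_conj.
have s_real : (s^-1)^* = s^-1.
  by apply: geC0_conj; rewrite invr_ge0 sqrtC_ge0 !addr_ge0 ?mulr_ge0.
have s_sq : s * s = n 0 * n 0 + n 1 * n 1 + n 2 * n 2 by rewrite -expr2 sqrtCK.
rewrite /kraus_complete !big_cons big_nil addr0; apply/matrixP => i j.
rewrite !mxE !big_ord_recl !big_ord0 !adjE !mxE -/s.
case_ord i; case_ord j;
  rewrite /= /bump /= ?addn0 ?add1n ?rmorph0 ?rmorphM /= ?s_real ?n_real; try by field.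
all: transitivity ((n 0 * n 0 + n 1 * n 1 + n 2 * n 2) / (s * s));
  [by field | by rewrite -s_sq divff ?mulf_neq0].
Qed.

Definition ghz_amp : C := ((Num.sqrt (3 : R))^-1)%:C%C.

Lemma ghz_amp_neq0 : ghz_amp != 0.
Proof.
have inv_sqrt3 : (Num.sqrt (3 : R))^-1 != 0 by rewrite invr_eq0 sqrtr_eq0 lern0.
by apply/eqP; case=> /eqP; apply/negP.
Qed.

Lemma spread_kraus_GHZ3 n m : (m < 3)%N ->
  apply_local 0 (spread_kraus n m) (GHZ3 R) =
  tri_scale ((weight_norm n)^-1 * ghz_amp)
    (apply_local 1 (cyclic_shift m)^T (apply_local 2 (cyclic_shift m)^T (diag_state n))).
Proof.
move=> lt_m3; apply: tri_ext => a b c.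
rewrite /apply_local /diag_state /GHZ3 /tri_scale /= !big_ord_recl !big_ord0 !mxE.
by case: m lt_m3 => [|[|[|m]]] // _; case_ord a; case_ord b; case_ord c;
  rewrite /= /bump /= -/ghz_amp; ring.
Qed.

Lemma locc_reach_GHZ3_diag_state phi (n : nat -> C) :
  (forall i, 0 <= n i) -> weight_norm n != 0 ->
  locc_reach phi (diag_state n) -> locc_reach phi (GHZ3 R).
Proof.
move=> n_ge0 s_neq0 reach_n.
apply: (locc_step (k := 0) (spread_kraus_complete n_ge0 s_neq0)) => M.
have branch m : (m < 3)%N -> locc_reach phi (apply_local 0 (spread_kraus n m) (GHZ3 R)).
  move=> lt_m3; rewrite spread_kraus_GHZ3 //.
  have [unit_shift shift_inv] := cyclic_shift_unitary lt_m3.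
  apply: locc_reach_scale; first by rewrite mulf_neq0 ?invr_eq0 ?ghz_amp_neq0.
  by do 2 apply: (locc_reach_undo _ unit_shift shift_inv).
by rewrite !inE => /or3P[] /eqP-> _; apply: branch.
Qed.

End Spreading.

Section Routing.
Context {R : realType}.
Local Notation C := R[i].

(* Branch [r] of the diagonal state is sent to the qubit pair [(route_a r, route_b r)],
   i.e. to [00], [01], [10]. *)
Definition route_a (r : nat) : nat := if r == 2 then 1 else 0.
Definition route_b (r : nat) : nat := if r == 1 then 1 else 0.

Definition route_mx (f : nat -> nat) : 'M[C]_3 :=
  \matrix_(a < 3, l < 3) if a == f l :> nat then 1 else 0.

Lemma route_mx_unit_columns f : (forall l, f l < 3)%N -> unit_columns (route_mx f).
Proof.
move=> f_lt3 l; rewrite (bigD1 (Ordinal (f_lt3 l))) //= big1 => [|c].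
  by rewrite !mxE eqxx rmorph1 mulr1 addr0.
by rewrite -val_eqE !mxE /= => /negbTE->; rewrite rmorph0 mulr0.
Qed.

Definition routed_state (n : nat -> C) : tri R 3 :=
  apply_local 1 (route_mx route_b) (apply_local 0 (route_mx route_a) (diag_state n)).

Lemma routed_stateE (n : nat -> C) a b l :
  routed_state n a b l = if (a == route_a l :> nat) && (b == route_b l :> nat) then n l else 0.
Proof.
rewrite /routed_state /apply_local /diag_state /= !big_ord_recl !big_ord0 !mxE.
by case_ord a; case_ord b; case_ord l; rewrite /= /bump /route_a /route_b /=; ring.
Qed.

Lemma diag_state_sign_movable (n : nat -> C) : sign_movable 0 (diag_state n).
Proof.
move=> e1 e2; exists 2, 2, e1, e2, false, false; split=> //.
rewrite sign_mx_ff apply_local1; apply: tri_ext => a b c.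
rewrite /apply_local /diag_state /= !big_ord_recl !big_ord0 !mxE.
by case_ord a; case_ord b; case_ord c; rewrite /= /bump /=; ring.
Qed.

Lemma routed_a_sign_movable (n : nat -> C) :
  sign_movable 1 (apply_local 0 (route_mx route_a) (diag_state n)).
Proof.
move=> e1 e2; exists 2, 2, e1, e2, false, false; split=> //.
rewrite sign_mx_ff apply_local1; apply: tri_ext => a b c.
rewrite /apply_local /diag_state /= !big_ord_recl !big_ord0 !mxE.
by case_ord a; case_ord b; case_ord c; rewrite /= /bump /route_a /=; ring.
Qed.

Lemma routed_state_sign_movable (n : nat -> C) : sign_movable 2 (routed_state n).
Proof.
move=> e1 e2; exists 0, 1, e2, false, e1, false; split=> //.
apply: tri_ext => a b c.
rewrite /apply_local /= !big_ord_recl !big_ord0 !routed_stateE !mxE.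
by case_ord a; case_ord b; case_ord c; rewrite /= /bump /route_a /route_b /=; ring.
Qed.

Lemma locc_reach_GHZ3_routed phi (n : nat -> C) (W : 'M[C]_3) :
  (forall i, 0 <= n i) -> weight_norm n != 0 -> unit_columns W ->
  locc_reach phi (apply_local 2 W (routed_state n)) -> locc_reach phi (GHZ3 R).
Proof.
move=> n_ge0 s_neq0 unitW reach_W.
apply: (locc_reach_GHZ3_diag_state n_ge0 s_neq0).
apply: (locc_reach_sign_twirl (M := route_mx route_a) _ (diag_state_sign_movable n)).
  by apply: route_mx_unit_columns => l; rewrite /route_a; case: (l == 2).
apply: (locc_reach_sign_twirl (M := route_mx route_b) _ (routed_a_sign_movable n)).
  by apply: route_mx_unit_columns => l; rewrite /route_b; case: (l == 1).
exact: (locc_reach_sign_twirl unitW (routed_state_sign_movable n)).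
Qed.

End Routing.

Lemma singular2_kernel (K : fieldType) (m00 m01 m10 m11 : K) :
  m00 * m11 - m01 * m10 = 0 -> exists y0 y1 : K,
  [/\ (y0 != 0) || (y1 != 0), m00 * y0 + m01 * y1 = 0 & m10 * y0 + m11 * y1 = 0].
Proof.
move=> det0.
have [m0_eq0|m0_neq0] := eqVneq (m00, m01) (0, 0).
  case: m0_eq0 => -> ->.
  have [m1_eq0|m1_neq0] := eqVneq (m10, m11) (0, 0).
    by case: m1_eq0 => -> ->; exists 1, 0; rewrite oner_eq0; split=> //; ring.
  exists m11, (- m10); split; try ring.
  by rewrite oppr_eq0 orbC -negb_and; apply: contra m1_neq0 => /andP[/eqP-> /eqP->].
exists (- m01), m00; split; [|ring|by rewrite -det0; ring].
by rewrite oppr_eq0 -negb_and; apply: contra m0_neq0 => /andP[/eqP-> /eqP->].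
Qed.

Section ClosedField.
Context {F : numClosedFieldType}.

Lemma quadratic_root (a b c : F) : a != 0 -> exists t : F, a * t ^+ 2 + b * t + c = 0.
Proof.
move=> a_neq0; set D := b ^+ 2 - 4 * a * c.
exists ((- b + sqrtC D) / (2 * a)).
have two_neq0 : (2 : F) != 0 by rewrite pnatr_eq0.
transitivity ((sqrtC D ^+ 2 - D) / (4 * a)); first by rewrite /D; field.
by rewrite sqrtCK subrr mul0r.
Qed.

Lemma exists_unit_multiple (x0 x1 : F) : (x0 != 0) || (x1 != 0) ->
  exists k : F, k != 0 /\ (k * x0) * (k * x0)^* + (k * x1) * (k * x1)^* = 1.
Proof.
move=> x_neq0; set N := x0 * x0^* + x1 * x1^*.
have N_neq0 : N != 0 by rewrite paddr_eq0 ?mul_conjC_ge0 // !mul_conjC_eq0 negb_and.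
have sN_neq0 : sqrtC N != 0 by rewrite sqrtC_eq0.
exists (sqrtC N)^-1; split; first by rewrite invr_eq0.
have k_real : ((sqrtC N)^-1)^* = (sqrtC N)^-1.
  by apply: geC0_conj; rewrite invr_ge0 sqrtC_ge0 addr_ge0 ?mul_conjC_ge0.
rewrite !rmorphM /= k_real.
transitivity (N / (sqrtC N * sqrtC N)); first by rewrite /N; field.
by rewrite -expr2 sqrtCK divff.
Qed.

Definition pencil (f : nat -> nat -> nat -> F) (x0 x1 : F) (b c : nat) : F :=
  x0 * f 0%N b c + x1 * f 1%N b c.

Lemma exists_singular_pencil f : exists x0 x1 : F, (x0 != 0) || (x1 != 0) /\
  pencil f x0 x1 0 0 * pencil f x0 x1 1 1 - pencil f x0 x1 1 0 * pencil f x0 x1 0 1 = 0.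
Proof.
pose a := f 0%N 0%N 0%N * f 0%N 1%N 1%N - f 0%N 1%N 0%N * f 0%N 0%N 1%N.
have [a_eq0|a_neq0] := eqVneq a 0.
  exists 1, 0; rewrite oner_eq0; split=> //.
  by rewrite -[RHS]a_eq0 /a /pencil; ring.
pose b := f 0%N 0%N 0%N * f 1%N 1%N 1%N + f 1%N 0%N 0%N * f 0%N 1%N 1%N
        - f 0%N 1%N 0%N * f 1%N 0%N 1%N - f 1%N 1%N 0%N * f 0%N 0%N 1%N.
pose c := f 1%N 0%N 0%N * f 1%N 1%N 1%N - f 1%N 1%N 0%N * f 1%N 0%N 1%N.
have [t t_root] := quadratic_root b c a_neq0.
exists t, 1; rewrite oner_eq0 orbT; split=> //.
by rewrite -[RHS]t_root /a /b /c /pencil; ring.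
Qed.

Lemma exists_annihilating_pair f : exists a0 a1 b0 b1 : F,
  [/\ a0 * a0^* + a1 * a1^* = 1, b0 * b0^* + b1 * b1^* = 1 &
      forall c, (c < 2)%N -> b0 * pencil f a0 a1 0 c + b1 * pencil f a0 a1 1 c = 0].
Proof.
have [x0 [x1 [x_neq0 x_singular]]] := exists_singular_pencil f.
have [y0 [y1 [y_neq0 y_ker0 y_ker1]]] := singular2_kernel x_singular.
have [k [_ kx_unit]] := exists_unit_multiple x_neq0.
have [l [_ ly_unit]] := exists_unit_multiple y_neq0.
exists (k * x0), (k * x1), (l * y0), (l * y1); split=> // -[|[|//]] _.
- by rewrite -[RHS](mulr0 (k * l)) -y_ker0 /pencil; ring.
- by rewrite -[RHS](mulr0 (k * l)) -y_ker1 /pencil; ring.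
Qed.

End ClosedField.

Section NormalForm.
Context {R : realType}.
Local Notation C := R[i].

Lemma inord0_2 : inord 0 = ord0 :> 'I_2.
Proof. by apply: val_inj; rewrite /= inordK. Qed.

Lemma inord1_2 : inord 1 = lift ord0 ord0 :> 'I_2.
Proof. by apply: val_inj; rewrite /= inordK. Qed.

Definition unitary_of_row (a0 a1 : C) : 'M[C]_2 :=
  \matrix_(i < 2, j < 2)
    if i == 0 :> nat then (if j == 0 :> nat then a1^* else - a0^*)
    else (if j == 0 :> nat then a0 else a1).

Lemma unitary_of_row_unitary a0 a1 : a0 * a0^* + a1 * a1^* = 1 ->
  adj (unitary_of_row a0 a1) *m unitary_of_row a0 a1 = 1%:M.
Proof.
move=> unit_a; apply/matrixP => i j; rewrite !mxE !big_ord_recl !big_ord0 !adjE !mxE /=.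
case: i => [[|[|i]] Hi] //; case: j => [[|[|j]] Hj] //=; rewrite ?rmorphN ?conjCK /=.
- by rewrite addr0 addrC [a0^* * _]mulrC.
- by rewrite addr0 mulrN mulrC addNr.
- by rewrite addr0 mulNr conjCK [a0 * _]mulrC addNr.
- by rewrite addr0 mulrNN conjCK [a1^* * _]mulrC.
Qed.

Lemma exists_normal_form (phi : tri R 2) : exists UA UB : 'M[C]_2,
  [/\ adj UA *m UA = 1%:M, adj UB *m UB = 1%:M &
      forall c, apply_local 0 UA (apply_local 1 UB phi) (inord 1) (inord 1) c = 0].
Proof.
pose f a b c := phi (inord a) (inord b) (inord c).
have [a0 [a1 [b0 [b1 [unit_a unit_b annihilated]]]]] := exists_annihilating_pair f.
exists (unitary_of_row a0 a1), (unitary_of_row b0 b1).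
split; try exact: unitary_of_row_unitary.
move=> c; rewrite -[RHS](annihilated c (ltn_ord c)) /f /pencil inord_val.
by rewrite !inord0_2 !inord1_2 /apply_local /= !big_ord_recl !big_ord0 !mxE /=; ring.
Qed.

End NormalForm.

Section Padding.
Context {R : realType}.
Local Notation C := R[i].

Definition pad_mx (U : 'M[C]_2) : 'M[C]_(3, 2) :=
  \matrix_(i < 3, j < 2) if (i < 2)%N then U (inord i) j else 0.

Lemma pad_mx_isometry (U : 'M[C]_2) : adj U *m U = 1%:M -> isometry32 (pad_mx U).
Proof.
move=> unitU; apply/matrixP => i j.
rewrite -[in RHS]unitU !mxE !big_ord_recl !big_ord0 !adjE !mxE /=.
by rewrite inord0_2 inord1_2 rmorph0 mul0r addr0.
Qed.

Lemma pad_mx_sum (U : 'M[C]_2) (a : 'I_3) (F : 'I_2 -> C) :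
  \sum_(a' < 2) pad_mx U a a' * F a' =
  if (a < 2)%N then \sum_(a' < 2) U (inord a) a' * F a' else 0.
Proof.
case: ifP => lt_a2; first by apply: eq_bigr => a' _; rewrite mxE lt_a2.
by rewrite big1 // => a' _; rewrite mxE lt_a2 mul0r.
Qed.

Lemma embed_pad (A B D : 'M[C]_2) (phi : tri R 2) a b c :
  embed (pad_mx A) (pad_mx B) (pad_mx D) phi a b c =
  if [&& a < 2, b < 2 & c < 2]%N
  then apply_local 0 A (apply_local 1 B (apply_local 2 D phi)) (inord a) (inord b) (inord c)
  else 0.
Proof.
transitivity (\sum_(a' < 2) pad_mx A a a' * \sum_(b' < 2) pad_mx B b b' *
                \sum_(c' < 2) pad_mx D c c' * phi a' b' c').
  rewrite /embed; apply: eq_bigr => a' _; rewrite mulr_sumr; apply: eq_bigr => b' _.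
  by rewrite !mulr_sumr; apply: eq_bigr => c' _; ring.
rewrite pad_mx_sum; under eq_bigr do rewrite pad_mx_sum.
under eq_bigr do under eq_bigr do rewrite pad_mx_sum.
case: (a < 2)%N => //=; case: (b < 2)%N => /=; last by rewrite big1 // => *; rewrite mulr0.
case: (c < 2)%N => //=.
by rewrite big1 // => *; rewrite big1 ?mulr0 // => *; rewrite mulr0.
Qed.

End Padding.

Section Assembly.
Context {R : realType}.
Local Notation C := R[i].
Variables (phi : tri R 2) (UA UB : 'M[C]_2).

Definition rotated_coef (a b c : nat) : C :=
  apply_local 0 UA (apply_local 1 UB phi) (inord a) (inord b) (inord c).

Definition branch (r c : nat) : C :=
  if (c < 2)%N then rotated_coef (route_a r) (route_b r) c else 0.

Definition branch_norm (r : nat) : C :=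
  sqrtC (branch r 0 * (branch r 0)^* + branch r 1 * (branch r 1)^*).

(* Column [l] is the normalized branch [l] (an arbitrary unit vector if it vanishes). *)
Definition branch_mx : 'M[C]_3 := \matrix_(c < 3, l < 3)
  if branch_norm l == 0 then (if c == 0 :> nat then 1 else 0)
  else branch l c / branch_norm l.

Lemma branch_norm_ge0 r : 0 <= branch_norm r.
Proof. by rewrite sqrtC_ge0 addr_ge0 ?mul_conjC_ge0. Qed.

Lemma branch_norm_sq r :
  branch_norm r * branch_norm r = branch r 0 * (branch r 0)^* + branch r 1 * (branch r 1)^*.
Proof. by rewrite -expr2 sqrtCK. Qed.

Lemma branch_norm_eq0 r : branch_norm r = 0 -> forall c, branch r c = 0.
Proof.
move=> norm0 c.
have : branch r 0 * (branch r 0)^* + branch r 1 * (branch r 1)^* == 0.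
  by rewrite -branch_norm_sq norm0 mulr0.
rewrite paddr_eq0 ?mul_conjC_ge0 // !mul_conjC_eq0 => /andP[/eqP br0 /eqP br1].
by case: c => [|[|c]] //; rewrite /branch.
Qed.

Lemma branch_mxK (c l : 'I_3) : branch_mx c l * branch_norm l = branch l c.
Proof.
rewrite mxE; case: eqP => [norm0|/eqP norm_neq0]; last by rewrite mulfVK.
by rewrite norm0 mulr0 branch_norm_eq0.
Qed.

Lemma branch_mx_unit_columns : unit_columns branch_mx.
Proof.
move=> l; rewrite !big_ord_recl big_ord0 !mxE /=.
case: eqP => [_|/eqP norm_neq0]; first by rewrite /= ?rmorph0 ?rmorph1; ring.
have norm_real : (branch_norm l)^* = branch_norm l by exact/geC0_conj/branch_norm_ge0.
rewrite !fmorph_div /= norm_real /branch /= rmorph0.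
transitivity ((branch l 0 * (branch l 0)^* + branch l 1 * (branch l 1)^*) /
              (branch_norm l * branch_norm l)); first by rewrite /branch /=; field.
by rewrite -branch_norm_sq divff // mulf_neq0.
Qed.

Hypothesis vanish : forall c, apply_local 0 UA (apply_local 1 UB phi) (inord 1) (inord 1) c = 0.

Lemma branch_mx_routed_stateE :
  apply_local 2 branch_mx (routed_state branch_norm) =
  (fun a b c => 1 * embed (pad_mx UA) (pad_mx UB) (pad_mx 1%:M) phi a b c).
Proof.
have vanish0 : rotated_coef 1 1 0 = 0 by exact: vanish.
have vanish1 : rotated_coef 1 1 1 = 0 by exact: vanish.
apply: tri_ext => a b c.
rewrite mul1r embed_pad apply_local1 -/(rotated_coef a b c) [LHS]/apply_local /=.
under eq_bigr do rewrite routed_stateE [_ * (if _ then _ else _)]fun_if mulr0 branch_mxK.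
rewrite !big_ord_recl big_ord0 /=.
by case_ord a; case_ord b; case_ord c;
  rewrite /= /bump /branch /route_a /route_b /= ?vanish0 ?vanish1; ring.
Qed.

Lemma rotated_state_eq0 : (forall r, (r < 3)%N -> branch_norm r = 0) ->
  apply_local 0 UA (apply_local 1 UB phi) = (fun _ _ _ => 0).
Proof.
move=> norm0; apply: tri_ext => a b c.
have branch0 r c' : (r < 3)%N -> (c' < 2)%N -> rotated_coef (route_a r) (route_b r) c' = 0.
  by move=> /norm0/branch_norm_eq0/(_ c') + lt_c; rewrite /branch lt_c.
rewrite -[a]inord_val -[b]inord_val -[c]inord_val -/(rotated_coef a b c).
by case_ord a; case_ord b; case_ord c; rewrite /=; first [exact: vanish |
  by apply: (branch0 0) | by apply: (branch0 1) | by apply: (branch0 2)].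
Qed.

Hypotheses (unitA : adj UA *m UA = 1%:M) (unitB : adj UB *m UB = 1%:M).

Lemma weight_norm_branch_neq0 : sqnorm phi = 1 -> weight_norm branch_norm != 0.
Proof.
move=> phi_unit; apply/eqP => /eqP; rewrite sqrtC_eq0.
have sq_ge0 r : 0 <= branch_norm r * branch_norm r by rewrite mulr_ge0 ?branch_norm_ge0.
rewrite !paddr_eq0 ?addr_ge0 // !mulf_eq0 !orbb => /andP[/andP[/eqP n0 /eqP n1] /eqP n2].
have phiE : phi = apply_local 1 (adj UB) (apply_local 0 (adj UA)
                    (apply_local 0 UA (apply_local 1 UB phi))).
  by rewrite apply_localM unitA apply_local1 apply_localM unitB apply_local1.
move: phi_unit; rewrite phiE rotated_state_eq0 => [|[|[|[|//]]] _ //].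
rewrite !apply_local0 /sqnorm big1 => [/esym/eqP|*]; first by rewrite oner_eq0.
by rewrite big1 // => *; rewrite big1 // => *; rewrite mul0r.
Qed.

End Assembly.

Theorem theorem2 (R : realType) (phi : tri R 2) :
  sqnorm phi = 1 -> locc_reach phi (GHZ3 R).
Proof.
move=> phi_unit.
have [UA [UB [unitA unitB vanish]]] := exists_normal_form phi.
apply: (locc_reach_GHZ3_routed (branch_norm_ge0 phi UA UB)
          (weight_norm_branch_neq0 vanish unitA unitB phi_unit)
          (branch_mx_unit_columns phi UA UB)).
rewrite branch_mx_routed_stateE //.
apply: locc_done => //.
- exact: (pad_mx_isometry unitA).
- exact: (pad_mx_isometry unitB).
- by apply: pad_mx_isometry; rewrite /adj map_mx1 rmorph1 trmx1 mulmx1.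
- exact: oner_neq0.
Qed.
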